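(* Let $(K,C,S)$ be the associated layered simplicial complex of a divided simplicial complex. If $(K',C',S')$ and $(K'',C'',S'')$ are layered spines of $(K,C,S)$ whose polyhedra $X=|K'|$ and $Y=|K''|$ are filtered spaces with respective singular sets $\Sigma_X=|S'|$ and $\Sigma_Y=|S''|$ whose formal codimensions coincide, then the stratified spines $(X,\Sigma_X)$ and $(Y,\Sigma_Y)$ are stratified homotopy equivalent.
   Context: A simplicial complex $K$ is a set of finite nonempty sets (simplices) such that every nonempty subset (face) of a simplex of $K$ lies in $K$; $K^0$ is the set of vertices; $t<s$ means $t$ is a proper face of $s$; $|K|$ is the geometric realization. A simplex is principal in $K$ if it is not a proper face of any simplex of $K$. A simplex $s$ is free in $K$ if it is a proper face of a principal simplex $p$ of $K$ and of no other simplex of $K$. A layered simplicial complex is a triple $(K,C,S)$ where $C,S$ are disjoint subcomplexes of $K$; its intermediate simplices $\mathrm{IM}(K,C,S)$ are the simplices lying in neither $C$ nor $S$. A divided simplicial complex is a pair $(K,S^0)$ with $S^0\subseteq K^0$; its associated layered complex is $(K,C,S)$ with $S$ the simplices all of whose vertices lie in $S^0$ and $C$ those all of whose vertices lie in $K^0-S^0$. An elementary $S$-collapse replaces $(K,C,S)$ by $(K-\{s,p\},C,S-\{s,p\})$, where $p\in S$ is principal in $K$ and $s$ is a face of $p$ free in $K$; an elementary $C$-collapse is defined symmetrically with $p\in C$. For $(K,C,S)$ associated to a divided complex, an elementary intermediate collapse replaces it by $(K-\{s,p\},C,S)$, where (i) $p\in\mathrm{IM}(K,C,S)$, (ii) $p$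 is principal in $K$, (iii) $s$ is a face of $p$ free in $K$, (iv) every $t\in S$ with $t<p$ satisfies $t<s$. An elementary layered collapse is an elementary $S$-, $C$- or intermediate collapse. A layered spine of $(K,C,S)$ is a layered complex obtained from $(K,C,S)$ by a finite sequence of elementary layered collapses and admitting no further elementary layered collapse; the corresponding polyhedral pair $(|K'|,|S'|)$ is a stratified spine. A filtered space here is a pair $(X,\Sigma)$ of a Hausdorff space and closed subset, with a formal dimension $n$ of $X$ and a formal codimension $k\ge1$ of $\Sigma$. A stratified map $f:(X,\Sigma_X)\to(Y,\Sigma_Y)$ is continuous with $f(\Sigma_X)\subseteq\Sigma_Y$, $f(X-\Sigma_X)\subseteq Y-\Sigma_Y$; codimension-preserving if the formal codimensions agree. A stratified homotopy is a stratified map $(X\times I,\Sigma_X\times I)\to(Y,\Sigma_Y)$. A stratified homotopy equivalence is a codimension-preserving stratified map $f$ admitting a stratified $g$ with $g\circ f$, $f\circ g$ stratified homotopic to the identities. *)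

From HB Require Import structures.
From mathcomp Require Import all_boot all_order all_algebra.
From mathcomp Require Import all_classical all_reals all_analysis.
From mathcomp Require Import Rstruct Rstruct_topology.
Set Implicit Arguments. Unset Strict Implicit. Unset Printing Implicit Defensive.
Import Order.TTheory GRing.Theory Num.Theory.

Section Simplicial.
Variable T : finType.
Local Open Scope bool_scope.

Definition simplicial_complex (K : {set {set T}}) : Prop :=
  (forall s, s \in K -> s != finset.set0) /\
  (forall s t, s \in K -> t != finset.set0 -> t \subset s -> t \in K).

Definition proper_face (t s : {set T}) : bool := t \proper s.

Definition subcomplex (L K : {set {set T}}) : Prop :=
  L \subset K /\ simplicial_complex L.

Definition vertices (K : {set {set T}}) : {set T} := \bigcup_(s in K) s.

Definition principal (K : {set {set T}}) (s : {set T}) : Prop :=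
  s \in K /\ (forall t, t \in K -> ~~ proper_face s t).

Definition free_face (K : {set {set T}}) (s p : {set T}) : Prop :=
  s \in K /\ principal K p /\ proper_face s p /\
  (forall t, t \in K -> proper_face s t -> t = p).

Record layered := Layered { lK : {set {set T}}; lC : {set {set T}}; lS : {set {set T}} }.

Definition is_layered (L : layered) : Prop :=
  simplicial_complex (lK L) /\ subcomplex (lC L) (lK L) /\
  subcomplex (lS L) (lK L) /\ lC L :&: lS L = finset.set0.

Definition IM (L : layered) : {set {set T}} := lK L :\: (lC L :|: lS L).

Definition divided (K : {set {set T}}) (S0 : {set T}) : Prop :=
  simplicial_complex K /\ S0 \subset vertices K.

Definition assoc_layered (K : {set {set T}}) (S0 : {set T}) : layered :=
  Layered K [set s in K | s \subset ~: S0] [set s in K | s \subset S0].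

Definition is_associated (L : layered) : Prop :=
  exists S0 : {set T}, divided (lK L) S0 /\ L = assoc_layered (lK L) S0.

Inductive elem_collapse : layered -> layered -> Prop :=
| S_collapse (K C S : {set {set T}}) (s p : {set T}) :
    p \in S -> principal K p -> free_face K s p ->
    elem_collapse (Layered K C S) (Layered (K :\: (s |: finset.set1 p)) C (S :\: (s |: finset.set1 p)))
| C_collapse (K C S : {set {set T}}) (s p : {set T}) :
    p \in C -> principal K p -> free_face K s p ->
    elem_collapse (Layered K C S) (Layered (K :\: (s |: finset.set1 p)) (C :\: (s |: finset.set1 p)) S)
| IM_collapse (K C S : {set {set T}}) (s p : {set T}) :
    is_associated (Layered K C S) ->
    p \in IM (Layered K C S) -> principal K p -> free_face K s p ->
    (forall t, t \in S -> proper_face t p -> proper_face t s) ->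
    elem_collapse (Layered K C S) (Layered (K :\: (s |: finset.set1 p)) C S).

Inductive collapses : layered -> layered -> Prop :=
| collapses_refl L : collapses L L
| collapses_step L1 L2 L3 : elem_collapse L1 L2 -> collapses L2 L3 -> collapses L1 L3.

Definition layered_spine (L' L : layered) : Prop :=
  collapses L L' /\ (forall L'', ~ elem_collapse L' L'').

(* Points of |K| are barycentric coordinate functions T -> R (R = the reals)
   that are nonnegative, sum to 1 and whose support is a simplex of K.
   T -> R carries the MathComp-Analysis function topology (T is finite, so
   this is the Euclidean topology of R^T). *)
Local Open Scope ring_scope.
Local Open Scope classical_set_scope.

Definition ambient : topologicalType := {ptws T -> Rdefinitions.R}.

Definition realization (K : {set {set T}}) : set ambient :=
  [set x | (forall v, 0 <= x v) /\ \sum_(v : T) x v = 1 /\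
           finset (fun v => x v != 0) \in K].

End Simplicial.


Section Stratified.
Local Open Scope ring_scope.
Local Open Scope classical_set_scope.

(* (X, Sigma) filtered space inside a Hausdorff ambient space, with formal
   dimension n and formal codimension k >= 1 of Sigma *)
Definition filtered_space (E : topologicalType) (X Sigma : set E) (n k : nat) : Prop :=
  hausdorff_space E /\ Sigma `<=` X /\ closed Sigma /\ (1 <= k)%N.

Definition stratified_map (E F : topologicalType) (X SX : set E) (Y SY : set F) (f : E -> F) : Prop :=
  {within X, continuous f} /\ f @` X `<=` Y /\ f @` SX `<=` SY /\
  f @` (X `\` SX) `<=` Y `\` SY.

Definition unit_interval : set Rdefinitions.R := `[0%R, 1%R]%classic.

Definition stratified_homotopy (E F : topologicalType) (X SX : set E) (Y SY : set F)
    (H : E * Rdefinitions.R -> F) : Prop :=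
  @stratified_map (E * Rdefinitions.R)%type F (X `*` unit_interval) (SX `*` unit_interval) Y SY H.

Definition stratified_homotopic (E F : topologicalType) (X SX : set E) (Y SY : set F) (f g : E -> F) : Prop :=
  exists H : E * Rdefinitions.R -> F, stratified_homotopy X SX Y SY H /\
    (forall x, X x -> H (x, 0) = f x) /\ (forall x, X x -> H (x, 1) = g x).

End Stratified.

Definition stratified_homotopy_equivalence (E F : topologicalType)
    (X SX : set E) (kX : nat) (Y SY : set F) (kY : nat) (f : E -> F) : Prop :=
  kX = kY /\ stratified_map X SX Y SY f /\
  exists g : F -> E, stratified_map Y SY X SX g /\
    stratified_homotopic X SX X SX (g \o f) id /\
    stratified_homotopic Y SY Y SY (f \o g) id.

Definition stratified_homotopy_equivalent (E F : topologicalType)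
    (X SX : set E) (kX : nat) (Y SY : set F) (kY : nat) : Prop :=
  exists f : E -> F, stratified_homotopy_equivalence X SX kX Y SY kY f.

From HB Require Import structures.
From mathcomp Require Import all_boot all_order all_algebra.
From mathcomp Require Import all_classical all_reals all_analysis.
From mathcomp Require Import Rstruct Rstruct_topology.
From mathcomp Require Import lra.

Set Implicit Arguments.
Unset Strict Implicit.
Unset Printing Implicit Defensive.
Import Order.TTheory GRing.Theory Num.Theory.
Local Open Scope ring_scope.
Local Open Scope classical_set_scope.

Local Notation R := Rdefinitions.R.

(** Each elementary layered collapse of the free face [s] of [p] is realized by
  the straight-line push of [|p|] from [|s|]: a point [x] moves along
  [1_s - c 1_(p \ s)], with [c = #|s| / #|p \ s|] so that barycentric
  coordinates keep summing to 1, by [t] times its least [s]-coordinate.  At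
  [t = 1] one [s]-coordinate vanishes, so [|K|] is deformed onto
  [|K \ {s, p}|]; points whose support misses a vertex of [s] never move.
  The supports met along the way are faces of [p] containing [s] or [p \ s],
  and condition (iv) of an intermediate collapse (or [p] lying in [C] or
  [S]) says exactly that these all lie on the same side of [S0], so the push
  preserves strata.  Concatenating the pushes deforms [|K|] onto either spine
  through stratum-preserving maps, and then the two end retractions restricted
  to the spines are mutually inverse stratified homotopy equivalences:
  [r' (G'' (x, 1 - t))] connects [r' (r'' x)] to [x] on [|K'|]. *)

Lemma continuous_compose (X Y Z : topologicalType) (f : X -> Y) (g : Y -> Z) :
  continuous f -> continuous g -> continuous (fun x => g (f x)).
Proof. by move=> cf cg x; exact: continuous_comp (cf x) (cg (f x)). Qed.

Lemma continuous_pair (X Y Z : topologicalType) (f : X -> Y) (g : X -> Z) :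
  continuous f -> continuous g -> continuous (fun x => (f x, g x)).
Proof. by move=> cf cg x; exact: cvg_pair (cf x) (cg x). Qed.

Lemma continuous_fst (X Y : topologicalType) : continuous (@fst X Y).
Proof. by move=> z; exact: cvg_fst. Qed.

Lemma continuous_snd (X Y : topologicalType) : continuous (@snd X Y).
Proof. by move=> z; exact: cvg_snd. Qed.

Section Realization.
Variable T : finType.
Implicit Types (K : {set {set T}}) (s : {set T}).
Local Notation A := (ambient T).

Lemma continuous_coord (v : T) : continuous (fun x : A => x v).
Proof. exact: (@proj_continuous T (fun _ => R) v). Qed.

Lemma continuous_ambient (X : topologicalType) (F : X -> A) :
  (forall v, continuous (fun z => F z v)) -> continuous F.
Proof.
by move=> cF z; apply/(@pointwise_cvgP (discrete_topology T) R) => v; exact: cF.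
Qed.

Definition supp (x : A) : {set T} := [set v | x v != 0].

Definition singular (S0 : {set T}) (x : A) : bool := supp x \subset S0.

Lemma realization_sub K K' : K' \subset K -> realization K' `<=` realization K.
Proof. by move=> sK x [x0 [x1 xK]]; split=> //; split=> //; exact: (fintype.subsetP sK). Qed.

Lemma realization_singular K (S0 : {set T}) (x : A) :
  realization [set sg in K | sg \subset S0] x <-> realization K x /\ singular S0 x.
Proof.
rewrite /realization /singular /supp /= inE; split; first by move=> [? [? /andP[]]].
by move=> [[? [? ?]] ?]; split=> //; split=> //; apply/andP.
Qed.

(* [v0] is only the seed of the fold; it is taken in [s] whenever it matters. *)
Definition min_on s (v0 : T) (x : A) : R := \big[Num.min/x v0]_(v in s) x v.

Lemma min_on_le s v0 (x : A) v : v \in s -> min_on s v0 x <= x v.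
Proof. exact: bigmin_le_cond. Qed.

Lemma min_on_attained s v0 (x : A) : v0 \in s -> exists2 v, v \in s & min_on s v0 x = x v.
Proof.
move=> sv0; apply: (big_ind (fun m => exists2 v, v \in s & m = x v)); first by exists v0.
  by move=> _ _ [u us ->] [w ws ->]; case: leP => _; [exists u | exists w].
by move=> v vs; exists v.
Qed.

Lemma min_on_ge0 s v0 (x : A) : (forall v, 0 <= x v) -> 0 <= min_on s v0 x.
Proof. by move=> x0; apply: le_bigmin. Qed.

Lemma min_on_gt0 s v0 (x : A) : v0 \in s -> (forall v, 0 <= x v) ->
  (0 < min_on s v0 x) = (s \subset supp x).
Proof.
move=> sv0 x0; apply/bigmin_gtP/fintype.subsetP => [[_ pos] v vs|sx].
  by rewrite inE gt_eqF ?pos.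
have pos v : v \in s -> 0 < x v by move/sx; rewrite inE lt_def x0 andbT.
by split; [exact: pos|].
Qed.

Lemma min_on_eq0 s v0 (x : A) : v0 \in s -> (forall v, 0 <= x v) ->
  ~~ (s \subset supp x) -> min_on s v0 x = 0.
Proof.
by move=> sv0 x0 sx; apply/eqP; rewrite eq_le min_on_ge0 // andbT leNgt min_on_gt0.
Qed.

Lemma continuous_min_on s v0 : continuous (min_on s v0).
Proof.
suff cont r : continuous (fun x : A => \big[Num.min/x v0]_(v <- r | v \in s) x v).
  exact: cont.
elim: r => [|u r IH].
  by under eq_fun do rewrite big_nil; exact: continuous_coord.
under eq_fun do rewrite big_cons; case: (u \in s) => //.
by move=> x; apply: continuous_min; [exact: continuous_coord | exact: IH].
Qed.

End Realization.

Definition first_half (t : R) : R := Num.min 1 (2 * t).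
Definition second_half (t : R) : R := Num.max 0 (2 * t - 1).

Lemma continuous_first_half : continuous first_half.
Proof.
move=> t; apply: continuous_min; first exact: cvg_cst.
by apply: continuousM; [exact: cvg_cst | exact: cvg_id].
Qed.

Lemma continuous_second_half : continuous second_half.
Proof.
move=> t; apply: (@continuous_max _ _ (fun=> 0) (fun t : R => 2 * t - 1)).
  exact: cvg_cst.
apply: (@continuousB _ R^o _ (fun t : R => 2 * t)); last exact: cvg_cst.
by apply: continuousM; [exact: cvg_cst | exact: cvg_id].
Qed.

Lemma halves_cases t : 0 <= t <= 1 ->
  (second_half t = 0 /\ 0 <= first_half t <= 1) \/
  (first_half t = 1 /\ 0 <= second_half t <= 1).
Proof.
rewrite /first_half /second_half => /andP[t0 t1].
case: (leP 1 (2 * t)) => h1; case: (leP 0 (2 * t - 1)) => h2;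
  [right | left | exfalso | left]; try split; try apply/andP; try split; lra.
Qed.

Lemma first_half0 : first_half 0 = 0.
Proof. by rewrite /first_half mulr0; case: (leP 1 0) => //; lra. Qed.

Lemma second_half0 : second_half 0 = 0.
Proof. by rewrite /second_half mulr0 sub0r; case: (leP 0 (-1)) => //; lra. Qed.

Lemma first_half1 : first_half 1 = 1.
Proof. by rewrite /first_half mulr1; case: (leP 1 2) => //; lra. Qed.

Lemma second_half1 : second_half 1 = 1.
Proof. by rewrite /second_half mulr1; case: (leP 0 (2 - 1)) => //; lra. Qed.

Section StratifiedDeformation.
Variable T : finType.
Implicit Types (K : {set {set T}}).
Local Notation A := (ambient T).

Record stratified_deformation K K' (S0 : {set T}) (G : A * R -> A) : Prop := {
  sdef_sub : K' \subset K;
  sdef_cont : continuous G;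
  sdef_start : forall x, G (x, 0) = x;
  sdef_path : forall x t, realization K x -> 0 <= t <= 1 ->
    realization K (G (x, t)) /\ singular S0 (G (x, t)) = singular S0 x;
  sdef_end : forall x, realization K x -> realization K' (G (x, 1));
  sdef_fix : forall x, realization K' x -> G (x, 1) = x }.

Definition retraction (G : A * R -> A) (x : A) : A := G (x, 1).

Lemma continuous_retraction (G : A * R -> A) : continuous G -> continuous (retraction G).
Proof.
move=> cG; apply: continuous_compose cG.
by apply: continuous_pair => [x|x]; [exact: cvg_id | exact: cvg_cst].
Qed.

Lemma sdef_retraction_singular K K' (S0 : {set T}) G :
  stratified_deformation K K' S0 G ->
  forall x, realization K x -> singular S0 (retraction G x) = singular S0 x.
Proof.
move=> def x Kx.
by have [] := sdef_path def Kx (t := 1) (ltac:(by rewrite ler01 lexx)).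
Qed.

Lemma stratified_deformation_refl K (S0 : {set T}) : stratified_deformation K K S0 fst.
Proof. by split=> // z; exact: cvg_fst. Qed.

Definition deformation_concat (G1 G2 : A * R -> A) (z : A * R) : A :=
  G2 (G1 (z.1, first_half z.2), second_half z.2).

Lemma stratified_deformation_trans K1 K2 K3 (S0 : {set T}) G1 G2 :
  stratified_deformation K1 K2 S0 G1 -> stratified_deformation K2 K3 S0 G2 ->
  stratified_deformation K1 K3 S0 (deformation_concat G1 G2).
Proof.
move=> def1 def2; have [s21 c1 start1 path1 end1 fix1] := def1.
have [s32 c2 start2 path2 end2 fix2] := def2; split.
- exact: fintype.subset_trans s32 s21.
- apply: continuous_compose c2; apply: continuous_pair.
    apply: continuous_compose c1; apply: continuous_pair; first exact: continuous_fst.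
    exact: continuous_compose (@continuous_snd _ _) continuous_first_half.
  exact: continuous_compose (@continuous_snd _ _) continuous_second_half.
- by move=> x; rewrite /deformation_concat /= first_half0 second_half0 start1 start2.
- move=> x t Kx t01; rewrite /deformation_concat /=.
  case: (halves_cases t01) => [[-> half1] | [-> half2]].
    by rewrite start2; exact: path1.
  have [K2y sy] := path2 _ _ (end1 x Kx) half2.
  split; first exact: realization_sub s21 _ K2y.
  by rewrite sy (sdef_retraction_singular def1 Kx).
- move=> x Kx; rewrite /deformation_concat /= first_half1 second_half1.
  by apply: end2; apply: end1.
- move=> x K3x; rewrite /deformation_concat /= first_half1 second_half1.
  by rewrite fix1 ?fix2 //; exact: realization_sub s32 _ K3x.
Qed.

End StratifiedDeformation.

Section CollapsePush.
Variable T : finType.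
Implicit Types (s p : {set T}).
Local Notation A := (ambient T).

Definition collapse_coef s p : R := #|s|%:R / #|p :\: s|%:R.

Definition collapse_dir s p (v : T) : R :=
  (if v \in s then 1 else 0) - (if v \in p :\: s then collapse_coef s p else 0).

Definition collapse_push s p (v0 : T) (z : A * R) : A :=
  (fun v => z.1 v - z.2 * min_on s v0 z.1 * collapse_dir s p v) : A.

Lemma sum_collapse_dir s p : s \proper p -> \sum_v collapse_dir s p v = 0.
Proof.
move=> sp; rewrite /collapse_dir sumrB -!big_mkcond /= !sumr_const.
have q0 : #|p :\: s|%:R != 0 :> R.
  rewrite pnatr_eq0 -lt0n; case/properP: sp => _ [v vp vs].
  by apply/card_gt0P; exists v; rewrite !inE vs vp.
by rewrite /collapse_coef -mulr_natr !mul1r -[_ / _ *+ _]mulr_natr divfK // subrr.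
Qed.

Lemma continuous_collapse_push s p v0 : continuous (collapse_push s p v0).
Proof.
apply: continuous_ambient => v z.
apply: (@continuousB _ R^o _ (fun z : A * R => z.1 v)).
  exact: continuous_compose (@continuous_fst _ _) (@continuous_coord T v) z.
apply: (@continuousM R _ (fun z : A * R => z.2 * min_on s v0 z.1)); last exact: cvg_cst.
apply: (@continuousM R _ snd); first exact: cvg_snd.
exact: continuous_compose (@continuous_fst _ _) (@continuous_min_on T s v0) z.
Qed.

Lemma collapse_push_t0 s p v0 (x : A) : collapse_push s p v0 (x, 0) = x.
Proof. by apply: boolp.funext => v; rewrite /collapse_push /= !mul0r subr0. Qed.

Lemma collapse_push_min0 s p v0 (x : A) t :
  min_on s v0 x = 0 -> collapse_push s p v0 (x, t) = x.
Proof.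
by move=> m0; apply: boolp.funext => v; rewrite /collapse_push /= m0 mulr0 mul0r subr0.
Qed.

End CollapsePush.

Definition stratified_pair (T : finType) (S0 s p : {set T}) : Prop :=
  forall w : {set T}, w \subset p -> (s \subset w) || (p :\: s \subset w) ->
    (w \subset S0) = (p \subset S0).

Section ElementaryCollapse.
Variable T : finType.
Variables (K : {set {set T}}) (S0 s p : {set T}) (v0 : T).
Local Notation A := (ambient T).
Local Notation h := (collapse_push s p v0).
Local Notation m := (min_on s v0).

Hypotheses (cK : simplicial_complex K) (fsp : free_face K s p).
Hypotheses (sS0 : stratified_pair S0 s p) (sv0 : v0 \in s).

Let sp : s \proper p. Proof. by case: fsp => _ [_ []]. Qed.
Let pK : p \in K. Proof. by case: fsp => _ [[]]. Qed.
Let opposite_face : exists v, v \in p :\: s.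
Proof. by case/properP: sp => _ [v vp vs]; exists v; rewrite !inE vs vp. Qed.

Lemma free_face_cofaces u : u \in K -> s \subset u -> u = s \/ u = p.
Proof.
move=> uK su; case: (eqVneq u s) => [->|us]; [by left | right].
case: fsp => _ [_ [_ coface]]; apply: coface => //.
by rewrite /proper_face finset.properEneq eq_sym us.
Qed.

Lemma collapse_push_off_star (x : A) t :
  (forall v, 0 <= x v) -> ~~ (s \subset supp x) -> h (x, t) = x.
Proof. by move=> x0 sx; rewrite collapse_push_min0 // min_on_eq0. Qed.

Lemma collapse_coef_gt0 : 0 < collapse_coef s p.
Proof.
rewrite divr_gt0 // ltr0n; apply/card_gt0P; first by exists v0.
by have [v vq] := opposite_face; exists v.
Qed.

Lemma collapse_dir_in v : v \in s -> collapse_dir s p v = 1.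
Proof. by move=> vs; rewrite /collapse_dir vs !inE vs subr0. Qed.

Lemma collapse_dir_opp v : v \in p :\: s -> collapse_dir s p v = - collapse_coef s p.
Proof.
move=> vq; move: (vq); rewrite !inE => /andP[/negbTE vs _].
by rewrite /collapse_dir vs vq sub0r.
Qed.

Lemma collapse_dir_out v : v \notin p -> collapse_dir s p v = 0.
Proof.
move=> vp; have vs : v \notin s by apply: contra vp; exact: (fintype.subsetP (proper_sub sp)).
by rewrite /collapse_dir (negbTE vs) !inE (negbTE vp) andbF subrr.
Qed.

Lemma sum_collapse_push (x : A) t : \sum_v h (x, t) v = \sum_v x v.
Proof. by rewrite /collapse_push /= sumrB -mulr_sumr sum_collapse_dir // mulr0 subr0. Qed.

Lemma collapse_push_supp (x : A) t : realization K x -> s \subset supp x -> 0 < t <= 1 ->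
  [/\ forall v, 0 <= h (x, t) v, supp (h (x, t)) \subset p & p :\: s \subset supp (h (x, t))].
Proof.
move=> [x0 [_ xK]] sx /andP[t0 t1].
have m0 : 0 < m x by rewrite min_on_gt0.
have xp : supp x \subset p.
  by case: (free_face_cofaces (u := supp x) xK sx) => ->; [exact: proper_sub | exact: subxx].
have c0 := collapse_coef_gt0.
split.
- move=> v; rewrite /collapse_push /=; case: (boolP (v \in s)) => vs.
    rewrite collapse_dir_in // mulr1; have := min_on_le v0 x vs.
    have : 0 <= (1 - t) * m x by apply: mulr_ge0; lra.
    lra.
  case: (boolP (v \in p :\: s)) => vq.
    rewrite collapse_dir_opp //; have := x0 v.
    have := mulr_gt0 (mulr_gt0 t0 m0) c0.
    lra.
  by rewrite collapse_dir_out ?mulr0 ?subr0 //; move: vq; rewrite !inE vs.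
- apply/fintype.subsetP => v; rewrite inE; apply: contraR => vp.
  rewrite /collapse_push /= collapse_dir_out // mulr0 subr0.
  by apply: contraNT vp => xv; apply: (fintype.subsetP xp); rewrite inE.
- apply/fintype.subsetP => v vq; rewrite inE /collapse_push /= collapse_dir_opp //.
  have := x0 v; have := mulr_gt0 (mulr_gt0 t0 m0) c0.
  by move=> ? ?; rewrite gt_eqF //; lra.
Qed.

Lemma collapse_push_path (x : A) t : realization K x -> 0 <= t <= 1 ->
  realization K (h (x, t)) /\ singular S0 (h (x, t)) = singular S0 x.
Proof.
move=> Kx /andP[t0 t1]; have [x0 [_ xK]] := Kx.
have [sx|sx] := boolP (s \subset supp x); last by rewrite collapse_push_off_star.
have [->|t_gt0] := eqVneq t 0; first by rewrite collapse_push_t0.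
have t01 : 0 < t <= 1 by rewrite lt_def t_gt0 t0.
have [y0 yp qy] := collapse_push_supp Kx sx t01.
have [v vq] := opposite_face.
have yK : supp (h (x, t)) \in K.
  case: cK => _ /(_ p _ pK) -> //; apply/finset.set0Pn; exists v.
  exact: (fintype.subsetP qy).
have xp : supp x \subset p.
  by case: (free_face_cofaces (u := supp x) xK sx) => ->; [exact: proper_sub | exact: subxx].
split; first by split=> //; split=> //; rewrite sum_collapse_push; case: Kx => _ [].
by rewrite /singular (sS0 yp) ?qy ?orbT // (sS0 xp) ?sx.
Qed.

Lemma collapse_push_end (x : A) : realization K x -> realization (K :\: [set s; p]) (h (x, 1)).
Proof.
move=> Kx.
have [[y0 [y1 yK]] _] := collapse_push_path Kx (t := 1) (ltac:(by rewrite ler01 lexx)).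
split=> //; split=> //; rewrite !inE yK andbT negb_or.
change ((supp (h (x, 1)) != s) && (supp (h (x, 1)) != p)).
have [x0 _] := Kx.
have [sx|sx] := boolP (s \subset supp x); last first.
  rewrite collapse_push_off_star //.
  by apply/andP; split; apply: contraNneq sx => ->; [exact: subxx | exact: proper_sub].
have [_ _ qy] := collapse_push_supp Kx sx (t := 1) (ltac:(by rewrite ltr01 lexx)).
have [v vq] := opposite_face; have [w ws xw] := min_on_attained x sv0.
apply/andP; split; apply/negP => /eqP ys.
  by move: vq (fintype.subsetP qy v vq); rewrite ys !inE => /andP[/negbTE ->].
have : w \in supp (h (x, 1)) by rewrite ys; exact: (fintype.subsetP (proper_sub sp)).
by rewrite inE /collapse_push /= collapse_dir_in // mul1r mulr1 -xw subrr eqxx.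
Qed.

Lemma collapse_push_fix (x : A) : realization (K :\: [set s; p]) x -> h (x, 1) = x.
Proof.
move=> [x0 [_]]; rewrite !inE negb_or => /andP[/andP[xs xp] xK].
apply: collapse_push_off_star => //; apply/negP => sx.
have := free_face_cofaces (u := supp x) xK sx.
by rewrite /supp => -[xE|xE]; rewrite xE eqxx in xs xp.
Qed.

End ElementaryCollapse.

Lemma collapse_stratified_deformation (T : finType) (K : {set {set T}}) (S0 s p : {set T}) :
  simplicial_complex K -> free_face K s p -> stratified_pair S0 s p ->
  exists G, stratified_deformation K (K :\: [set s; p]) S0 G.
Proof.
move=> cK fsp sS0; have [sK _] := fsp.
have /finset.set0Pn [v0 sv0] := cK.1 s sK.
exists (collapse_push s p v0); split.
- exact: finset.subsetDl.
- exact: continuous_collapse_push.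
- exact: collapse_push_t0.
- by move=> x t; exact: (collapse_push_path cK fsp sS0 sv0).
- exact: (collapse_push_end cK fsp sS0 sv0).
- exact: (collapse_push_fix fsp sv0).
Qed.

Section LayeredCollapse.
Variable T : finType.
Implicit Types (K : {set {set T}}) (s p w : {set T}).

Lemma simplicial_complex_collapse K s p :
  simplicial_complex K -> free_face K s p -> simplicial_complex (K :\: [set s; p]).
Proof.
move=> [ne fc] [_ [[pK pmax] [_ coface]]]; split.
  by move=> sg; rewrite !inE => /andP[_]; exact: ne.
move=> sg w; rewrite !inE negb_or => /andP[/andP[sgs sgp] sgK] w0 wsg.
rewrite (fc _ _ sgK w0 wsg) andbT; apply/negP => /orP[] /eqP wE; subst w.
  by move: sgp; rewrite (coface _ sgK) ?eqxx // /proper_face finset.properEneq eq_sym sgs.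
by move: (pmax _ sgK); rewrite /proper_face finset.properEneq eq_sym sgp wsg.
Qed.

Lemma stratified_pair_singular (S0 s p : {set T}) : p \subset S0 -> stratified_pair S0 s p.
Proof. by move=> pS0 w wp _; rewrite pS0 (fintype.subset_trans wp pS0). Qed.

Lemma stratified_pair_faces_nonempty s p w : s != finset.set0 -> s \proper p ->
  (s \subset w) || (p :\: s \subset w) -> w != finset.set0.
Proof.
move=> s0 sp /orP[] sub; apply/negP => /eqP w0; move: sub; rewrite w0 finset.subset0.
  by apply/negP.
by rewrite finset.setD_eq0 => ps; move: sp; rewrite fintype.properE ps andbF.
Qed.

Lemma regular_not_singular (S0 w : {set T}) :
  w != finset.set0 -> w \subset ~: S0 -> ~~ (w \subset S0).
Proof.
move=> /finset.set0Pn [v vw] wS0; apply/negP => wS0'.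
by move: (fintype.subsetP wS0 v vw); rewrite inE (fintype.subsetP wS0' v vw).
Qed.

Lemma stratified_pair_regular (S0 s p : {set T}) :
  s != finset.set0 -> s \proper p -> p \subset ~: S0 -> stratified_pair S0 s p.
Proof.
move=> s0 sp pS0.
have regular w : w \subset p -> (s \subset w) || (p :\: s \subset w) -> (w \subset S0) = false.
  move=> wp sw; apply/negbTE/regular_not_singular; last exact: fintype.subset_trans wp pS0.
  exact: stratified_pair_faces_nonempty s0 sp sw.
by move=> w wp sw; rewrite !regular // proper_sub.
Qed.

Lemma stratified_pair_intermediate K (S0 s p : {set T}) :
  simplicial_complex K -> free_face K s p -> ~~ (p \subset S0) ->
  (forall w, w \in K -> w \subset S0 -> w \proper p -> w \proper s) ->
  stratified_pair S0 s p.
Proof.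
move=> [ne fc] [sK [[pK _] [sp _]]] pS0 below_s w wp sw.
rewrite (negbTE pS0); apply/negbTE/negP => wS0.
have wK : w \in K := fc _ _ pK (stratified_pair_faces_nonempty (ne _ sK) sp sw) wp.
have wpp : w \proper p by rewrite finset.properEneq wp andbT; apply: contraNneq pS0 => <-.
have /fintype.properP [ws [v sv wv]] := below_s _ wK wS0 wpp.
case/orP: sw => [sw|qw]; first by move: wv; rewrite (fintype.subsetP sw).
have /fintype.properP [_ [u up us]] := sp.
have : u \in s by apply: (fintype.subsetP ws); apply: (fintype.subsetP qw); rewrite !inE us up.
by rewrite (negbTE us).
Qed.

Lemma singular_part_collapse K (S0 s p : {set T}) :
  stratified_pair S0 s p -> s \subset p -> ~~ (p \subset S0) ->
  [set sg in K :\: [set s; p] | sg \subset S0] = [set sg in K | sg \subset S0].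
Proof.
move=> sS0 sp pS0; have sS0' : ~~ (s \subset S0) by rewrite sS0 // subxx.
apply/finset.setP => sg; rewrite !inE.
have [sgS0|] := boolP (sg \subset S0); last by rewrite !andbF.
have /andP[sgs sgp] : (sg != s) && (sg != p).
  by apply/andP; split; [apply: contraNneq sS0' | apply: contraNneq pS0] => <-.
by rewrite negb_or sgs sgp.
Qed.

Definition layered_by (S0 : {set T}) (L : layered T) : Prop :=
  [/\ simplicial_complex (lK L), forall sg, sg \in lC L -> sg \subset ~: S0
    & lS L = [set sg in lK L | sg \subset S0]].

Lemma elem_collapse_deformation (S0 : {set T}) L1 L2 :
  layered_by S0 L1 -> elem_collapse L1 L2 ->
  layered_by S0 L2 /\ exists G, stratified_deformation (lK L1) (lK L2) S0 G.
Proof.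
move=> inv ec; case: ec inv => /=
    [K C S s p pS _ fsp | K C S s p pC _ fsp | K C S s p _ pIM _ fsp below];
  move=> [/= cK Creg Sdef]; have [sK [[pK _] [sp _]]] := fsp.
- have pS0 : p \subset S0 by move: pS; rewrite Sdef inE => /andP[].
  split; last exact/collapse_stratified_deformation/stratified_pair_singular.
  split=> //=; first exact: simplicial_complex_collapse.
  by apply/finset.setP => sg; rewrite Sdef !inE andbA.
- have pS0 := Creg p pC; have s0 := cK.1 s sK.
  have sS0 := stratified_pair_regular s0 sp pS0.
  split; last exact: collapse_stratified_deformation.
  split=> /=; first exact: simplicial_complex_collapse.
    by move=> sg; rewrite inE => /andP[_]; exact: Creg.
  rewrite singular_part_collapse ?(proper_sub sp) //.
  exact: regular_not_singular (cK.1 p pK) pS0.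
- have pS0 : ~~ (p \subset S0) by move: pIM; rewrite /IM /= Sdef !inE pK andbT => /norP[_].
  have sS0 : stratified_pair S0 s p.
    apply: stratified_pair_intermediate cK fsp pS0 _ => w wK wS0.
    by apply: below; rewrite Sdef inE wK.
  split; last exact: collapse_stratified_deformation.
  split=> //=; first exact: simplicial_complex_collapse.
  by rewrite Sdef singular_part_collapse ?(proper_sub sp).
Qed.

Lemma collapses_deformation (S0 : {set T}) L1 L2 :
  collapses L1 L2 -> layered_by S0 L1 ->
  layered_by S0 L2 /\ exists G, stratified_deformation (lK L1) (lK L2) S0 G.
Proof.
elim=> [L|La Lb Lc ec _ IH] inv.
  by split=> //; exists fst; exact: stratified_deformation_refl.
have [invb [G1 def1]] := elem_collapse_deformation inv ec.
have [invc [G2 def2]] := IH invb.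
by split=> //; exists (deformation_concat G1 G2); exact: stratified_deformation_trans def1 def2.
Qed.

End LayeredCollapse.

Section SpinesHomotopyEquivalent.
Variable T : finType.
Variables (K K' K'' : {set {set T}}) (S0 : {set T}) (G' G'' : ambient T * R -> ambient T).
Hypotheses (def' : stratified_deformation K K' S0 G')
           (def'' : stratified_deformation K K'' S0 G'').

Local Notation stratum L := (realization [set sg in L | sg \subset S0]).

Lemma stratified_map_retraction :
  stratified_map (realization K') (stratum K') (realization K'') (stratum K'') (retraction G'').
Proof.
have K'K := realization_sub (sdef_sub def').
split; [|split; [|split]].
- exact/continuous_subspaceT/continuous_retraction/(sdef_cont def'').
- by move=> _ [x /K'K Kx <-]; exact: (sdef_end def'' Kx).
- move=> _ [x /realization_singular [/K'K Kx sx] <-]; apply/realization_singular.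
  by rewrite (sdef_retraction_singular def'' Kx); split=> //; exact: (sdef_end def'' Kx).
- move=> _ [x [K'x nsx] <-]; have Kx := K'K x K'x.
  split; first exact: (sdef_end def'' Kx).
  case/realization_singular=> _; rewrite (sdef_retraction_singular def'' Kx) => sx.
  by apply: nsx; apply/realization_singular.
Qed.

Lemma stratified_homotopic_retractions :
  stratified_homotopic (realization K') (stratum K') (realization K') (stratum K')
    (retraction G' \o retraction G'') id.
Proof.
have K'K := realization_sub (sdef_sub def').
pose H (z : ambient T * R) := retraction G' (G'' (z.1, 1 - z.2)).
have H_path x t : realization K' x -> unit_interval t ->
    realization K' (H (x, t)) /\ singular S0 (H (x, t)) = singular S0 x.
  move=> K'x; rewrite /unit_interval /= in_itv /= => /andP[t0 t1].
  have [Ky sy] := sdef_path def'' (K'K x K'x) (t := 1 - t) (ltac:(apply/andP; split; lra)).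
  by split; [exact: (sdef_end def' Ky) | rewrite /H (sdef_retraction_singular def' Ky)].
exists H; split; [split; [|split; [|split]] | split].
- apply/continuous_subspaceT/continuous_compose/continuous_retraction/(sdef_cont def').
  apply/continuous_compose/(sdef_cont def'').
  apply: continuous_pair; first exact: continuous_fst.
  move=> z; apply: (@continuousB _ R^o); first exact: cvg_cst.
  exact: continuous_snd.
- by move=> _ [[x t] [K'x It] <-]; exact: (H_path x t K'x It).1.
- move=> _ [[x t] [/realization_singular [K'x sx] It] <-]; have [Hx sH] := H_path x t K'x It.
  by apply/realization_singular; rewrite sH.
- move=> _ [[x t] [[K'x It] nsx] <-]; have [Hx sH] := H_path x t K'x It.
  split=> // /realization_singular [_]; rewrite sH => sx.
  by apply: nsx; split=> //; apply/realization_singular.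
- by move=> x K'x; rewrite /H /= subr0.
- by move=> x K'x; rewrite /H /= subrr (sdef_start def'') /retraction (sdef_fix def').
Qed.

End SpinesHomotopyEquivalent.

Theorem corollary6p3 (T : finType) (K : {set {set T}}) (S0 : {set T})
    (L' L'' : layered T) (nX kX nY kY : nat) :
  divided K S0 ->
  layered_spine L' (assoc_layered K S0) ->
  layered_spine L'' (assoc_layered K S0) ->
  filtered_space (realization (lK L')) (realization (lS L')) nX kX ->
  filtered_space (realization (lK L'')) (realization (lS L'')) nY kY ->
  kX = kY ->
  stratified_homotopy_equivalent
    (realization (lK L')) (realization (lS L')) kX
    (realization (lK L'')) (realization (lS L'')) kY.
Proof.
move=> [cK _] [coll' _] [coll'' _] _ _ ->.
have layered_K : layered_by S0 (assoc_layered K S0).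
  by split=> //= sg; rewrite inE => /andP[].
have [[_ _ ->] [G' def']] := collapses_deformation coll' layered_K.
have [[_ _ ->] [G'' def'']] := collapses_deformation coll'' layered_K.
exists (retraction G''); split=> //; split; first exact: stratified_map_retraction def' def''.
exists (retraction G'); split; first exact: stratified_map_retraction def'' def'.
by split; [exact: stratified_homotopic_retractions def' def'' |
           exact: stratified_homotopic_retractions def'' def'].
Qed.
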